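(* Let $P$ be a finite poset and $t\geq 2$ an integer, and suppose $\mathrm{sat}^{\star}([t]^n,P)=O(1)$ as $n\to\infty$. Then there exists $N\in\mathbb{Z}_{>0}$ such that the function $n\mapsto\mathrm{sat}^{\star}([t]^n,P)$ is constant on the integers $n>N$.
   Context: For positive integers $n,t$, $[n]=\{1,\dots,n\}$ and the hypergrid $[t]^n$ is the set of functions $f:[n]\to[t]$, partially ordered by $f\leq g$ iff $f(i)\leq g(i)$ for all $i\in[n]$. An induced copy of a poset $P$ in a family $\mathcal{F}\subseteq[t]^n$ is an injective map $\phi:P\to\mathcal{F}$ such that $\phi(x)\leq\phi(y)$ iff $x\leq_P y$. A family $\mathcal{F}\subseteq[t]^n$ is induced $P$-free if it contains no induced copy of $P$; it is induced $P$-saturated if it is induced $P$-free and for every $f\in[t]^n\setminus\mathcal{F}$ the family $\mathcal{F}\cup\{f\}$ contains an induced copy of $P$. Whenever $P$ embeds as an induced subposet of $[t]^n$, $\mathrm{sat}^{\star}([t]^n,P)$ denotes the minimum size of an induced $P$-saturated family in $[t]^n$. *)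

From mathcomp Require Import all_boot all_order.
Set Implicit Arguments. Unset Strict Implicit. Unset Printing Implicit Defensive.
Import Order.TTheory.

(* The hypergrid [t]^n, with [t] = {1..t} modelled by 'I_t = {0..t-1}
   (an order isomorphism, i |-> i+1). *)
Definition grid (t n : nat) := {ffun 'I_n -> 'I_t}.

Definition grid_le (t n : nat) (f g : grid t n) : bool :=
  [forall i, (f i <= g i)%N].

Definition has_induced_copy (d : Order.disp_t) (P : finPOrderType d)
  (t n : nat) (F : {set grid t n}) : bool :=
  [exists phi : {ffun P -> grid t n},
     [&& injectiveb phi,
         [forall x, phi x \in F] &
         [forall x, forall y, grid_le (phi x) (phi y) == (x <= y)%O]]].

Definition induced_free (d : Order.disp_t) (P : finPOrderType d)
  (t n : nat) (F : {set grid t n}) : bool :=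
  ~~ has_induced_copy P F.

Definition induced_saturated (d : Order.disp_t) (P : finPOrderType d)
  (t n : nat) (F : {set grid t n}) : bool :=
  induced_free P F &&
  [forall f : grid t n, (f \notin F) ==> has_induced_copy P (f |: F)].

Definition embeds (d : Order.disp_t) (P : finPOrderType d) (t n : nat) : bool :=
  has_induced_copy P [set: grid t n].

(* sat*([t]^n, P): minimum size of an induced P-saturated family.
   If no such family exists the value is the (junk) default t^n + 1,
   which exceeds the size of every family. *)
Definition sat_star (d : Order.disp_t) (P : finPOrderType d) (t n : nat) : nat :=
  \big[minn/(t ^ n).+1]_(F : {set grid t n} | induced_saturated P F) #|F|.

From mathcomp Require Import all_boot all_order.
From mathcomp Require Import zify.
From Stdlib Require Import Classical.

Set Implicit Arguments. Unset Strict Implicit. Unset Printing Implicit Defensive.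
Import Order.TTheory.

(* If n > t^|F|, the columns of an induced P-saturated family F in [t]^n
   cannot all be distinct, so there are coordinates i <> j with f i = f j for
   every f in F.  Doubling coordinate i then gives an induced P-saturated
   family of the same size in [t]^(n+1): a new point g that is not a doubled
   point is "squashed" back to [t]^n by folding its last coordinate into
   coordinates i (minimum) and j (maximum), which preserves comparabilities
   with the points of F.  Hence sat*([t]^n, P) is eventually nonincreasing,
   and a bounded nonincreasing sequence of naturals is eventually constant. *)

Lemma ord_minE t (x y : 'I_t) : nat_of_ord (Order.min x y) = minn x y.
Proof. by rewrite /Order.min ltEord; case: ltnP; lia. Qed.

Lemma ord_maxE t (x y : 'I_t) : nat_of_ord (Order.max x y) = maxn x y.
Proof. by rewrite /Order.max ltEord; case: ltnP; lia. Qed.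

Lemma grid_le_refl t n (f : grid t n) : grid_le f f.
Proof. exact/forallP. Qed.

Lemma has_induced_copy_transfer d (P : finPOrderType d) t m n
    (F : {set grid t m}) (G : {set grid t n}) (e : grid t m -> grid t n) :
  {in F &, forall f g, grid_le (e f) (e g) = grid_le f g} ->
  {in F &, injective e} -> {subset e @: F <= G} ->
  has_induced_copy P F -> has_induced_copy P G.
Proof.
move=> e_le e_inj eFG /existsP[phi /and3P[/injectiveP phi_inj /forallP phiF phi_le]].
apply/existsP; exists [ffun x => e (phi x)]; apply/and3P; split.
- apply/injectiveP => x y; rewrite !ffunE => /(e_inj _ _ (phiF x) (phiF y)).
  exact: phi_inj.
- by apply/forallP => x; rewrite ffunE eFG ?imset_f.
- apply/forallP => x; apply/forallP => y; rewrite !ffunE e_le //.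
  exact: (forallP (forallP phi_le x) y).
Qed.

Section DoublingCoordinate.

Variables t n : nat.
Implicit Types (f : grid t n) (g : grid t n.+1).

Definition dup_coord (i : 'I_n) f : grid t n.+1 :=
  [ffun k => if unlift ord_max k is Some k' then f k' else f i].

Definition drop_last g : grid t n := [ffun k => g (lift ord_max k)].

Definition squash g (i j : 'I_n) : grid t n :=
  let gi := g (lift ord_max i) in let gj := g (lift ord_max j) in
  [ffun k => if k == i then Order.min (Order.min gi gj) (g ord_max)
             else if k == j then Order.max (Order.max gi gj) (g ord_max)
             else g (lift ord_max k)].

Lemma dup_coordK i : cancel (dup_coord i) drop_last.
Proof. by move=> f; apply/ffunP => k; rewrite !ffunE liftK. Qed.

Lemma dup_coord_last i f : dup_coord i f ord_max = f i.
Proof. by rewrite ffunE unlift_none. Qed.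

Lemma drop_lastK i g : g ord_max = g (lift ord_max i) -> dup_coord i (drop_last g) = g.
Proof.
move=> g_last; apply/ffunP => k; rewrite ffunE.
by case: (unliftP ord_max k) => [k' ->|->]; rewrite ?liftK ?unlift_none ffunE.
Qed.

Lemma grid_leS g g' :
  grid_le g g' = grid_le (drop_last g) (drop_last g') && (g ord_max <= g' ord_max)%N.
Proof.
apply/forallP/andP => [le_gg' | [/forallP le_drop le_last] k].
  by split=> //; apply/forallP => k; rewrite !ffunE.
by case: (unliftP ord_max k) => [k' ->|->] //; move: (le_drop k'); rewrite !ffunE.
Qed.

Lemma grid_le_dup i f f' : grid_le (dup_coord i f) (dup_coord i f') = grid_le f f'.
Proof.
by rewrite grid_leS !dup_coordK !dup_coord_last andb_idr // => /forallP.
Qed.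

Variables (d : Order.disp_t) (P : finPOrderType d) (F : {set grid t n}) (i : 'I_n).

Lemma induced_free_dup : induced_free P F -> induced_free P (dup_coord i @: F).
Proof.
apply: contra; apply: (has_induced_copy_transfer (e := drop_last)).
- by move=> _ _ /imsetP[f _ ->] /imsetP[f' _ ->]; rewrite !dup_coordK grid_le_dup.
- by move=> _ _ /imsetP[f _ ->] /imsetP[f' _ ->]; rewrite !dup_coordK => ->.
- by move=> _ /imsetP[_ /imsetP[f Ff ->] ->]; rewrite dup_coordK.
Qed.

Lemma has_induced_copy_dup f :
  has_induced_copy P (f |: F) -> has_induced_copy P (dup_coord i f |: dup_coord i @: F).
Proof.
apply: has_induced_copy_transfer; first exact: in2W (@grid_le_dup i).
  exact: in2W (can_inj (dup_coordK i)).
by rewrite imsetU1.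
Qed.

Variable j : 'I_n.
Hypothesis ji : j != i.

Lemma eq_last_of_squash_coords g :
  squash g i j i = squash g i j j -> g ord_max = g (lift ord_max i).
Proof.
rewrite !ffunE eqxx (negbTE ji) eqxx => /(congr1 val) /=.
by rewrite !ord_minE !ord_maxE => ?; apply: val_inj => /=; lia.
Qed.

Lemma squash_le g f :
  f i = f j -> grid_le (squash g i j) f = grid_le g (dup_coord i f).
Proof.
move=> /(congr1 (@nat_of_ord t)) fij; rewrite (grid_leS g) dup_coordK dup_coord_last.
apply/forallP/andP => [le_hf | [/forallP le_gf le_last] k]; rewrite ?ffunE.
- have := le_hf i; have := le_hf j.
  rewrite !ffunE eqxx (negbTE ji) eqxx !ord_minE !ord_maxE => le_j le_i.
  split; last by lia.
  apply/forallP => k; rewrite ffunE.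
  case: (eqVneq k i) => [->|ki]; first by lia.
  case: (eqVneq k j) => [->|kj]; first by lia.
  by move: (le_hf k); rewrite ffunE (negbTE ki) (negbTE kj).
- have := le_gf i; have := le_gf j; rewrite !ffunE => le_j le_i.
  case: (eqVneq k i) => [->|ki]; first by rewrite !ord_minE; lia.
  case: (eqVneq k j) => [->|kj]; first by rewrite !ord_maxE; lia.
  by have := le_gf k; rewrite ffunE.
Qed.

Lemma le_squash g f :
  f i = f j -> grid_le f (squash g i j) = grid_le (dup_coord i f) g.
Proof.
move=> /(congr1 (@nat_of_ord t)) fij; rewrite (grid_leS _ g) dup_coordK dup_coord_last.
apply/forallP/andP => [le_fh | [/forallP le_fg le_last] k]; rewrite ?ffunE.
- have := le_fh i; have := le_fh j.
  rewrite !ffunE eqxx (negbTE ji) eqxx !ord_minE !ord_maxE => le_j le_i.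
  split; last by lia.
  apply/forallP => k; rewrite ffunE.
  case: (eqVneq k i) => [->|ki]; first by lia.
  case: (eqVneq k j) => [->|kj]; first by lia.
  by move: (le_fh k); rewrite ffunE (negbTE ki) (negbTE kj).
- have := le_fg i; have := le_fg j; rewrite !ffunE => le_j le_i.
  case: (eqVneq k i) => [->|ki]; first by rewrite !ord_minE; lia.
  case: (eqVneq k j) => [->|kj]; first by rewrite !ord_maxE; lia.
  by have := le_fg k; rewrite ffunE.
Qed.

Hypothesis F_ij : forall f, f \in F -> f i = f j.

Lemma has_induced_copy_squash g :
  g \notin dup_coord i @: F -> squash g i j \notin F ->
  has_induced_copy P (squash g i j |: F) -> has_induced_copy P (g |: dup_coord i @: F).
Proof.
move=> gF /negbTE hF.
apply: (has_induced_copy_transfer (e := fun f => if f \in F then dup_coord i f else g)).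
- move=> f1 f2 /setU1P[->|Ff1] /setU1P[->|Ff2]; rewrite ?hF ?Ff1 ?Ff2.
  + by rewrite !grid_le_refl.
  + by rewrite squash_le //; apply: F_ij.
  + by rewrite le_squash //; apply: F_ij.
  + exact: grid_le_dup.
- move=> f1 f2 /setU1P[->|Ff1] /setU1P[->|Ff2]; rewrite ?hF ?Ff1 ?Ff2 //.
  + by move=> g_dup; rewrite g_dup imset_f in gF.
  + by move=> dup_g; rewrite -dup_g imset_f in gF.
  + exact/(can_inj (dup_coordK i)).
- move=> _ /imsetP[f /setU1P[->|Ff] ->]; first by rewrite hF setU11.
  by rewrite Ff setU1r ?imset_f.
Qed.

Lemma induced_saturated_dup :
  induced_saturated P F -> induced_saturated P (dup_coord i @: F).
Proof.
move=> /andP[F_free /forallP F_sat]; rewrite /induced_saturated induced_free_dup //=.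
apply/forallP => g; apply/implyP => gF.
have [g_last|g_last] := eqVneq (g ord_max) (g (lift ord_max i)).
  rewrite -(drop_lastK g_last) in gF *; apply: has_induced_copy_dup.
  by apply: (implyP (F_sat _)); apply: contra gF; apply: imset_f.
have hF : squash g i j \notin F by apply/negP => /F_ij /eq_last_of_squash_coords; apply/eqP.
exact: has_induced_copy_squash gF hF (implyP (F_sat _) hF).
Qed.

End DoublingCoordinate.

Lemma equal_coords_of_card t n (F : {set grid t n}) : (t ^ #|F| < n)%N ->
  exists i j : 'I_n, j != i /\ forall f, f \in F -> f i = f j.
Proof.
move=> ltn_tF.
pose column (k : 'I_n) : {ffun {f : grid t n | f \in F} -> 'I_t} :=
  [ffun f => (sval f : grid t n) k].
have /injectivePn[i [j ij col_ij]] : ~~ injectiveb column.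
  apply: contraTN ltn_tF => /injectiveP/leq_card.
  by rewrite card_ffun !card_ord card_sig -leqNgt.
exists i, j; split; first by rewrite eq_sym.
by move=> f Ff; move/ffunP/(_ (exist _ f Ff)): col_ij; rewrite !ffunE.
Qed.

Lemma sat_star_le_card d (P : finPOrderType d) t n (F : {set grid t n}) :
  induced_saturated P F -> (sat_star P t n <= #|F|)%N.
Proof.
move=> satF; rewrite /sat_star.
have : F \in index_enum {set grid t n} by rewrite mem_index_enum.
elim: (index_enum _) => // G r IH; rewrite big_cons in_cons => /orP[/eqP <-|].
  by rewrite satF geq_minl.
by move/IH; case: ifP => // _ le_rF; rewrite geq_min le_rF orbT.
Qed.

Lemma sat_star_attained d (P : finPOrderType d) t n : (sat_star P t n <= t ^ n)%N ->
  exists2 F : {set grid t n}, induced_saturated P F & #|F| = sat_star P t n.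
Proof.
rewrite /sat_star; elim/big_ind: _ => [|m1 m2 IH1 IH2|F satF _]; first by rewrite ltnn.
  by rewrite /minn; case: ifP.
by exists F.
Qed.

Lemma sat_star_succ_le_card d (P : finPOrderType d) t n (F : {set grid t n}) :
  induced_saturated P F -> (t ^ #|F| < n)%N -> (sat_star P t n.+1 <= #|F|)%N.
Proof.
move=> satF /equal_coords_of_card[i [j [ji F_ij]]].
apply: leq_trans (sat_star_le_card (induced_saturated_dup ji F_ij satF)) _.
by rewrite card_imset //; apply: can_inj (dup_coordK i).
Qed.

Lemma nonincreasing_eventually_const (s : nat -> nat) M :
  (forall n, (M <= n)%N -> (s n.+1 <= s n)%N) ->
  exists2 N, (M <= N)%N & forall n, (N <= n)%N -> s n = s N.
Proof.
move=> s_dec.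
have s_mono a b : (M <= a <= b)%N -> (s b <= s a)%N.
  move=> /andP[Ma]; elim: b => [|b IH]; first by rewrite leqn0 => /eqP ->.
  rewrite leq_eqVlt => /orP[/eqP <-//|ab].
  exact: leq_trans (s_dec _ (leq_trans Ma ab)) (IH ab).
suff {s_dec} from_bound v a : (M <= a)%N -> (s a <= v)%N ->
    exists2 N, (M <= N)%N & forall n, (N <= n)%N -> s n = s N.
  exact: (from_bound (s M) M).
elim: v a => [|v IH] a Ma sa_v.
  by exists a => // n an; have := s_mono a n; rewrite Ma an; lia.
have [[n an s_na]|const_a] := classic (exists2 n, (a <= n)%N & s n != s a).
  apply: (IH n); first exact: leq_trans an.
  by have := s_mono a n; rewrite Ma an; lia.
by exists a => // n an; apply/eqP/contraT => s_na; case: const_a; exists n.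
Qed.

Theorem mainTheorem2 (d : Order.disp_t) (P : finPOrderType d) (t : nat) :
  (2 <= t)%N ->
  (exists C n0 : nat, forall n : nat, (n0 <= n)%N ->
      embeds P t n /\ (sat_star P t n <= C)%N) ->
  exists N : nat, (0 < N)%N /\
    forall n m : nat, (N < n)%N -> (N < m)%N -> sat_star P t n = sat_star P t m.
Proof.
move=> t_ge2 [C [n0 sat_le_C]].
have sat_dec n : (maxn n0 (t ^ C).+1 <= n)%N -> (sat_star P t n.+1 <= sat_star P t n)%N.
  rewrite geq_max => /andP[n0n tCn].
  have [_ satn_C] := sat_le_C n n0n.
  have := ltn_expl C t_ge2; have := ltn_expl n t_ge2 => n_lt C_lt.
  have [|F satF cardF] := @sat_star_attained d P t n; first by lia.
  rewrite -cardF; apply: sat_star_succ_le_card satF _.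
  by apply: leq_ltn_trans tCn; rewrite leq_pexp2l ?cardF //; lia.
have [N _ sat_const] := nonincreasing_eventually_const sat_dec.
exists N.+1; split=> // n m Nn Nm.
by rewrite (sat_const n (ltnW (ltnW Nn))) (sat_const m (ltnW (ltnW Nm))).
Qed.
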